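(* In the network model described in the context, let $\pi$ be an admissible cyclic policy with maximum inter-scheduling times $k^{\pi}_e$, and suppose the slice widths satisfy $w_{i,e}\ge\lambda_i k^{\pi}_e$ for all $e\in\mathcal{T}^{(i)}$. Then the delay deficit of any packet belonging to flow $f_i$ is never larger than zero when it arrives at a new link of its route.
   Context: Network model: directed graph $G=(V,E)$, slotted time, link capacities $c_e$, interference given by a conflict graph on links with feasible activation sets $\mathcal{M}$. Flow $f_i$ has fixed route $\mathcal{T}^{(i)}$ and deterministic fluid arrival rate $\lambda_i>0$ per slot at its source. Link $e\in\mathcal{T}^{(i)}$ reserves a slice $w_{i,e}$ for $f_i$ with its own first-come-first-served queue (initially empty). An admissible policy activates $\mu^\pi(t)\in\mathcal{M}$ in each slot and is work-conserving (an activated link serves $\min\{Q_{i,e}(t),w_{i,e}\}$ from each slice queue; served units proceed to the next link of the route). A cyclic policy satisfies $\mu^\pi(t)=\mu^\pi(t+K^\pi)$ for all $t\ge0$. The maximum inter-scheduling time $k_e^\pi$ of link $e$ is the largest number of slots between two consecutive activations of $e$ (cyclically over the period), so that $e$ is activated at least once in every window of $k_e^\pi$ consecutive slots. For a packet $l$ of $f_i$ arriving at its source at time $t_0^l$, its age at time $t$ is $a^l(t)=t-t_0^l$, and its delay deficit is $\delta^l(t)=a^l(t)-\sum_{e\in\tilde{T}^{(l)}}k_e^\pi$, where $\tilde{T}^{(l)}$ is the set of links of its route at which it has already been served (so $\delta^l=0$ on arrival at the source, it increases by one each slot, and decreases by $k_e^\pi$ when the packet is served at link $e$). *)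

From mathcomp Require Import all_boot all_order all_algebra.
Set Implicit Arguments. Unset Strict Implicit. Unset Printing Implicit Defensive.
Import Order.TTheory GRing.Theory Num.Theory.
Local Open Scope ring_scope.

Section Model.
Variables (R : realFieldType) (V E : finType).

Definition is_route (src dst : E -> V) (r : seq E) : bool :=
  uniq r && sorted (fun e e' => dst e == src e') r.

Definition feasible (conflict : rel E) (S : {set E}) : bool :=
  [forall e, forall e', ((e \in S) && (e' \in S)) ==> ~~ conflict e e'].

Definition next_gap (mu : nat -> {set E}) (K : nat) (e : E) (s : nat) : nat :=
  (find (fun d => e \in mu (s + d.+1)) (iota 0 K)).+1.

Definition kmax (mu : nat -> {set E}) (K : nat) (e : E) : nat :=
  \max_(s < K | e \in mu s) next_gap mu K e s.

Definition hop_active (r : seq E) (mu : nat -> {set E}) (j t : nat) : bool :=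
  if onth r j is Some e then e \in mu t else false.

Definition hop_width (r : seq E) (w : E -> R) (j : nat) : R :=
  if onth r j is Some e then w e else 0.

(* Work-conserving fluid dynamics of one flow (arrival rate lam per slot,
   route r, slice widths w) under activation sequence mu.
   cum_dep t j = total amount served at hop j during slots 0..t-1.
   Amount arrived at hop j during slots 0..t: lam*(t+1) at the source,
   cum_dep t (j-1) downstream (served at the previous hop in slot t-1 or
   earlier). *)
Fixpoint cum_dep (lam : R) (r : seq E) (w : E -> R) (mu : nat -> {set E})
    (t : nat) : nat -> R :=
  match t with
  | 0 => fun _ => 0
  | t'.+1 => fun j =>
      let D := cum_dep lam r w mu t' in
      let arr := if j is j'.+1 then D j' else lam * (t'.+1)%:R in
      D j + (if hop_active r mu j t' then Num.min (arr - D j) (hop_width r w j)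
             else 0)
  end.

(* Fluid packets are labeled by their cumulative position x > 0 in the
   arrival stream of the flow (FCFS everywhere).  Packet x arrives at the
   source in slot t0: *)
Definition arrival_slot (lam : R) (x : R) (t0 : nat) : bool :=
  (lam * t0%:R < x) && (x <= lam * t0.+1%:R).

(* Packet x is served at hop j during slot s (it then arrives at hop j+1
   at time s+1). *)
Definition served_at (lam : R) (r : seq E) (w : E -> R) (mu : nat -> {set E})
    (j s : nat) (x : R) : bool :=
  (cum_dep lam r w mu s j < x) && (x <= cum_dep lam r w mu s.+1 j).

End Model.

(* Delay deficit at time t of a packet that arrived at its source at t0 and
   has already been served at links with inter-scheduling times ks. *)
Definition delay_deficit (t t0 : nat) (ks : seq nat) : int :=
  (t%:Z - t0%:Z - (sumn ks)%:Z)%R.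

From mathcomp Require Import all_boot all_order all_algebra.
From mathcomp Require Import zify.
Set Implicit Arguments. Unset Strict Implicit.
Import Order.TTheory GRing.Theory Num.Theory.
Local Open Scope ring_scope.

(* Each hop of a flow is a work-conserving queue that, by periodicity of the
   policy, is activated at least once in every window of k_e consecutive slots
   and then serves up to w_e >= lam k_e.  Hence, if a hop has received at least
   lam (n + 1 - S) by slot n, it has served at least lam (n + 1 - S - k_e)
   before slot n: each hop delays the stream by at most k_e slots.  Inducting
   along the route, a packet that arrived by slot t0 has been served at the
   j-th hop by slot t0 + k_1 + ... + k_j - 1, which is the claimed bound on
   its delay deficit. *)

Section Periodic.
Variables (E : finType) (mu : nat -> {set E}) (K : nat) (e : E).
Hypotheses (K_gt0 : (0 < K)%N) (mu_periodic : forall t, mu (t + K)%N = mu t).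

Lemma mu_modK t : mu (t %% K)%N = mu t.
Proof.
rewrite {2}(divn_eq t K) addnC; elim: (t %/ K)%N => [|q IH]; first by rewrite addn0.
by rewrite mulSn addnCA addnC mu_periodic.
Qed.

Lemma next_gap_active s : e \in mu s -> e \in mu (s + next_gap mu K e s)%N.
Proof.
move=> es; set P := fun d => e \in mu (s + d.+1)%N.
have hasP : has P (iota 0 K).
  apply/hasP; exists K.-1; first by rewrite mem_iota; lia.
  by rewrite /P prednK // mu_periodic.
by have := nth_find 0 hasP; rewrite has_find size_iota in hasP; rewrite nth_iota // addnS.
Qed.

Lemma next_gap_le_kmax s : (s < K)%N -> e \in mu s -> (next_gap mu K e s <= kmax mu K e)%N.
Proof.
by move=> sK es; exact: (leq_bigmax_cond (Ordinal sK)).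
Qed.

Lemma next_activation a :
  e \in mu a -> exists2 g, (0 < g <= kmax mu K e)%N & e \in mu (a + g)%N.
Proof.
move=> ea; have es : e \in mu (a %% K)%N by rewrite mu_modK.
exists (next_gap mu K e (a %% K)); first by rewrite next_gap_le_kmax // ltn_pmod.
by rewrite -mu_modK -modnDml mu_modK next_gap_active.
Qed.

Lemma activation_lt_kmax t : e \in mu t -> exists2 a, (a < kmax mu K e)%N & e \in mu a.
Proof.
move=> et; pose P a := (a < K)%N && (e \in mu a).
have exP : exists a, P a by exists (t %% K)%N; rewrite /P ltn_pmod // mu_modK.
have boundP a : P a -> (a <= K)%N by case/andP=> /ltnW.
case: (ex_maxnP exP boundP) => a /andP[aK ea] maxa.
have [g /andP[g_gt0 g_le] eag] := next_activation ea.
(* The last activation before K is followed by one at a + g >= K, i.e. at a + g - K < g. *)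
have Kag : (K <= a + g)%N.
  rewrite leqNgt; apply/negP => agK.
  by have := maxa (a + g)%N; rewrite /P agK eag => /(_ isT); lia.
exists (a + g - K)%N; first by lia.
by rewrite -mu_periodic subnK.
Qed.

Lemma kmax_window t : e \in mu t ->
  forall b, exists2 a, (b <= a < b + kmax mu K e)%N & e \in mu a.
Proof.
move=> et; elim=> [|b [a /andP[ba abk] ea]].
  by have [a ak ea] := activation_lt_kmax et; exists a.
have [ltba | eqba] := ltnP b a; first by exists a => //; lia.
have [g /andP[g_gt0 g_le] eag] := next_activation ea.
by exists (a + g)%N => //; lia.
Qed.

End Periodic.

Lemma hop_width_ge_map (R : realFieldType) (E : finType) (r : seq E) (w : E -> R)
    (k : E -> nat) (lam : R) :
  (forall e, e \in r -> lam * (k e)%:R <= w e) ->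
  forall l, lam * (nth 0%N (map k r) l)%:R <= hop_width r w l.
Proof.
move=> hw l; rewrite /hop_width -odflt_onth onth_map.
case El: onth => [e|] /=; last by rewrite mulr0.
by apply: hw; apply/onthP; exists l.
Qed.

Lemma hop_active_window (E : finType) (mu : nat -> {set E}) (K : nat) (r : seq E) l :
  (0 < K)%N -> (forall t, mu (t + K)%N = mu t) ->
  (exists t, hop_active r mu l t) ->
  forall b, exists2 a, (b <= a < b + nth 0%N [seq kmax mu K e | e <- r] l)%N
                     & hop_active r mu l a.
Proof.
move=> K_gt0 mu_periodic; rewrite /hop_active -odflt_onth onth_map.
by case: onth => [e|] [t et] //=; apply: kmax_window et.
Qed.

Section Queue.
Variables (R : realFieldType) (c : R) (act : nat -> bool) (A D : nat -> R).
Hypotheses (c_ge0 : 0 <= c) (A_ge0 : forall t, 0 <= A t)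
  (A_nondecr : forall t, A t <= A t.+1) (D0 : D 0%N = 0)
  (DS : forall t, D t.+1 = D t + (if act t then Num.min (A t - D t) c else 0)).

Lemma queue_active t : act t -> D t.+1 = Num.min (A t) (D t + c).
Proof. by move=> act_t; rewrite DS act_t addrC addr_minl subrK [c + _]addrC. Qed.

Lemma queue_idle t : ~~ act t -> D t.+1 = D t.
Proof. by move=> /negbTE idle_t; rewrite DS idle_t addr0. Qed.

Lemma queue_ge0_le t : 0 <= D t <= A t.
Proof.
elim: t => [|t /andP[D_ge0 D_le]]; first by rewrite D0 lexx A_ge0.
have A_le := le_trans D_le (A_nondecr t).
case: (boolP (act t)) => [/queue_active | /queue_idle] ->; last by rewrite D_ge0.
by rewrite le_min ge_min (le_trans D_ge0 D_le) addr_ge0 // A_nondecr.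
Qed.

Lemma queue_nondecr t : D t <= D t.+1.
Proof.
have /andP[_ D_le] := queue_ge0_le t.
case: (boolP (act t)) => [/queue_active | /queue_idle] ->; last by [].
by rewrite le_min D_le lerDl.
Qed.

Lemma queue_homo : {homo D : m n / (m <= n)%N >-> m <= n}.
Proof. exact: homo_leq le_trans queue_nondecr. Qed.

Lemma queue_gt0_active t : 0 < D t -> exists a, act a.
Proof.
elim: t => [|t IH]; first by rewrite D0 ltxx.
by case: (boolP (act t)) => [act_t _ | /queue_idle ->]; [exists t | exact: IH].
Qed.

Variables (lam : R) (S k : nat).
Hypotheses (lam_ge0 : 0 <= lam) (lam_k_le_c : lam * k%:R <= c)
  (window : forall b, exists2 a, (b <= a < b + k)%N & act a)
  (A_lower : forall a, lam * (a.+1%:R - S%:R) <= A a).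

(* An activation at a serves either the whole backlog (D a.+1 = A a) or c >= lam k,
   which makes up the k slots of the window. *)
Lemma queue_lower_bound n : lam * (n.+1%:R - (S + k)%:R) <= D n.
Proof.
elim/ltn_ind: n => n IH.
have /andP[D_ge0 _] := queue_ge0_le n.
case: (leqP n.+1 (S + k)) => [le_nSk | lt_Skn].
  apply: le_trans D_ge0; rewrite mulr_ge0_le0 //.
  by rewrite subr_le0 ler_nat.
have [a /andP[nk_a a_nk] act_a] := window (n - k)%N.
have a_n : (a < n)%N by lia.
have served : lam * (a.+1%:R - S%:R) <= D a.+1.
  rewrite queue_active // le_min A_lower /=.
  have -> : lam * (a.+1%:R - S%:R) = lam * (a.+1%:R - (S + k)%:R) + lam * k%:R.
    by rewrite -mulrDr natrD opprD addrA subrK.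
  exact: lerD (IH a a_n) lam_k_le_c.
apply: le_trans (le_trans served (queue_homo a_n)).
by rewrite ler_wpM2l // lerBlDr natrD addrA subrK -natrD ler_nat; lia.
Qed.

End Queue.

Lemma sumn_take_nth (s : seq nat) n : sumn (take n.+1 s) = (sumn (take n s) + nth 0 s n)%N.
Proof.
have [lt_ns | le_sn] := ltnP n (size s); first by rewrite (take_nth 0 lt_ns) sumn_rcons.
by rewrite !take_oversize ?nth_default ?addn0 // ltnW.
Qed.

Section Flow.
Variables (R : realFieldType) (E : finType) (lam : R) (r : seq E) (w : E -> R)
  (mu : nat -> {set E}).
Hypotheses (lam_ge0 : 0 <= lam) (w_ge0 : forall e, e \in r -> 0 <= w e).

Local Notation D := (cum_dep lam r w mu).

Definition hop_arrivals (l t : nat) : R :=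
  if l is l'.+1 then D t l' else lam * t.+1%:R.

Lemma cum_depS l t : D t.+1 l = D t l +
  (if hop_active r mu l t then Num.min (hop_arrivals l t - D t l) (hop_width r w l) else 0).
Proof. by case: l. Qed.

Lemma hop_width_ge0 l : 0 <= hop_width r w l.
Proof.
rewrite /hop_width; case El: onth => [e|] //.
by apply: w_ge0; apply/onthP; exists l.
Qed.

Lemma hop_arrivals_ge0_nondecr l :
  (forall t, 0 <= hop_arrivals l t) /\ (forall t, hop_arrivals l t <= hop_arrivals l t.+1).
Proof.
elim: l => [|l [A_ge0 A_nondecr]].
  by split=> t; rewrite ?mulr_ge0 ?ler_wpM2l ?ler_nat.
have /= D_ge0_le := queue_ge0_le (hop_width_ge0 l) A_ge0 A_nondecr (erefl _) (cum_depS l).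
split=> t; first by have /andP[] := D_ge0_le t.
exact: (queue_nondecr (hop_width_ge0 l) A_ge0 A_nondecr (erefl _) (cum_depS l)).
Qed.

Lemma cum_dep_le_arrivals l t : D t l <= hop_arrivals l t.
Proof.
have [A_ge0 A_nondecr] := hop_arrivals_ge0_nondecr l.
by have /andP[] := queue_ge0_le (hop_width_ge0 l) A_ge0 A_nondecr (erefl _) (cum_depS l) t.
Qed.

Lemma cum_dep_gt0_hop_active l j t :
  (l <= j)%N -> 0 < D t j -> exists a, hop_active r mu l a.
Proof.
move=> le_lj D_gt0; apply: (queue_gt0_active (erefl _) (cum_depS l) (t := t)).
rewrite -(subnK le_lj) in D_gt0; elim: (j - l)%N D_gt0 => [|d IH] //= D_gt0.
by apply: IH; apply: lt_le_trans D_gt0 (cum_dep_le_arrivals _ _).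
Qed.

Lemma cum_dep_lower_bound (ks : seq nat) j :
  (forall l, lam * (nth 0%N ks l)%:R <= hop_width r w l) ->
  (forall l, (l <= j)%N ->
     forall b, exists2 a, (b <= a < b + nth 0%N ks l)%N & hop_active r mu l a) ->
  forall n, lam * (n.+1%:R - (sumn (take j.+1 ks))%:R) <= D n j.
Proof.
move=> width window.
have hop_bound l : (l <= j)%N ->
    (forall a, lam * (a.+1%:R - (sumn (take l ks))%:R) <= hop_arrivals l a) ->
    forall n, lam * (n.+1%:R - (sumn (take l.+1 ks))%:R) <= D n l.
  move=> le_lj A_lower; have [A_ge0 A_nondecr] := hop_arrivals_ge0_nondecr l.
  rewrite sumn_take_nth.
  exact: (queue_lower_bound (hop_width_ge0 l) A_ge0 A_nondecr (erefl _) (cum_depS l)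
            lam_ge0 (width l) (window l le_lj) A_lower).
elim: j window hop_bound => [|j IH] window hop_bound.
  by apply: hop_bound => // a; rewrite take0 subr0.
apply: (hop_bound j.+1) => //; apply: IH => l /leqW le_lj; [exact: window | exact: hop_bound].
Qed.

End Flow.

Unset Implicit Arguments.
Theorem lemma2 (R : realFieldType) (V E I : finType)
  (src dst : E -> V) (conflict : rel E)
  (route : I -> seq E) (lam : I -> R) (w : I -> E -> R)
  (mu : nat -> {set E}) (K : nat) :
  (forall i, is_route src dst (route i)) ->
  (forall i, 0 < lam i) ->
  (forall t, feasible conflict (mu t)) ->
  (0 < K)%N -> (forall t, mu (t + K)%N = mu t) ->
  (forall i e, e \in route i -> lam i * (kmax mu K e)%:R <= w i e) ->
  forall (i : I) (j : nat) (x : R) (t0 s : nat),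
    (j.+1 < size (route i))%N ->
    arrival_slot (lam i) x t0 ->
    served_at (lam i) (route i) (w i) mu j s x ->
    delay_deficit s.+1 t0 [seq kmax mu K e | e <- take j.+1 (route i)] <= 0.
Proof.
(* Slices are dedicated. *)
move=> _ lam_gt0 _ K_gt0 mu_periodic kmax_le_w i j x t0 s _ /andP[x_gt x_le] /andP[D_lt D_ge].
have lam_ge0 := ltW (lam_gt0 i).
have w_ge0 e : e \in route i -> 0 <= w i e.
  by move/kmax_le_w; apply: le_trans; rewrite mulr_ge0.
have x_gt0 : 0 < x by apply: le_lt_trans x_gt; rewrite mulr_ge0.
(* kmax is 0 for a link that is never activated, so the activity of the hops
   up to j has to be read off the service of x. *)
have active l : (l <= j)%N -> exists a, hop_active (route i) mu l a.
  move=> le_lj; apply: (cum_dep_gt0_hop_active lam_ge0 w_ge0 le_lj (t := s.+1)).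
  exact: lt_le_trans D_ge.
have bound := cum_dep_lower_bound lam_ge0 w_ge0 (hop_width_ge_map (kmax_le_w i))
  (fun l le_lj => hop_active_window K_gt0 mu_periodic (active l le_lj)) s.
have := le_lt_trans bound (lt_le_trans D_lt x_le).
rewrite ltr_pM2l // ltrBlDr -natrD ltr_nat /delay_deficit map_take.
by set S := sumn _; lia.
Qed.
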